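(* Let $d\ge 2$, $m\ge 1$, and let the ancillae $A_1,\dots,A_{m}$ consecutively measure a prepared quantum system $Q$, so that the joint pure state of $Q A_1\cdots A_m$ is $$|\Psi\rangle=\sum_{x_1,\dots,x_m}\alpha^{(1)}_{x_1}U^{(2)}_{x_1x_2}\cdots U^{(m)}_{x_{m-1}x_m}\,|\widetilde{x}_m\rangle_Q|x_1\rangle_{A_1}\cdots|x_m\rangle_{A_m}.$$ Then the reduced density matrix $\rho(A_1\cdots A_m)=\mathrm{Tr}_Q|\Psi\rangle\langle\Psi|$ is a classical-quantum state of the form $$\rho(A_1\cdots A_m)=\sum_{x_m}q^{(m)}_{x_m}\,|\psi_{x_m}\rangle\langle\psi_{x_m}|\otimes|x_m\rangle\langle x_m|,$$ where $q^{(m)}$ is the probability distribution of outcomes of $A_m$ and each $|\psi_{x_m}\rangle$ is a normalized pure state of $A_1\cdots A_{m-1}$, and its joint entropy is contained only in the last device: $$S(A_1\cdots A_m)=S(A_m).$$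
   Context: $Q$ is a $d$-dimensional quantum system initially in the pure state $|Q\rangle=\sum_{x_1=1}^d\alpha^{(1)}_{x_1}|\widetilde{x}_1\rangle$ (''prepared'' state). For each $i$ an orthonormal basis $\{|\widetilde{x}_i\rangle\}_{x_i=1}^d$ of $Q$ is the basis measured by ancilla $A_i$, and $U^{(i)}_{x_{i-1}x_i}=\langle\widetilde{x}_i|\widetilde{x}_{i-1}\rangle$ ($i\ge2$) are the entries of a unitary $d\times d$ matrix. Each ancilla $A_i$ is a $d$-dimensional system with orthonormal basis $\{|x\rangle\}_{x=1}^d$, starting in a fixed state $|0\rangle$; the measurement by $A_i$ is the unitary $U_{QA_i}=\sum_{x}|\widetilde{x}_i\rangle\langle\widetilde{x}_i|\otimes U_x$ with $U_x|0\rangle=|x\rangle$, applied in the order $A_1,A_2,\dots$; this yields the displayed state $|\Psi\rangle$. The outcome distribution of $A_m$ is $q^{(m)}_{x_m}=\sum_{x_1,\dots,x_{m-1}}|\alpha^{(1)}_{x_1}|^2|U^{(2)}_{x_1x_2}|^2\cdots|U^{(m)}_{x_{m-1}x_m}|^2$. $S(X)=-\mathrm{Tr}\,\rho(X)\log_d\rho(X)$ denotes the von Neumann entropy (logarithm base $d$) of the reduced state of subsystem $X$. *)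

From HB Require Import structures.
From mathcomp Require Import all_boot all_order all_algebra.
From mathcomp Require Export spectral.
From mathcomp Require Import reals exp.
From mathcomp Require Export complex.
Set Implicit Arguments.
Unset Strict Implicit.
Unset Printing Implicit Defensive.
Import Order.TTheory GRing.Theory Num.Theory.
Local Open Scope ring_scope.

Section QDefs.
Variable R : realType.
Local Notation C := (R[i]).

(* For a basis matrix B, column j of B is the basis vector |j~> written in
   the fixed computational basis of Q; "B \is unitarymx" (mathcomp spectral.v)
   means the columns of B form an orthonormal basis of C^d. *)

(* ---------- consecutive measurements ----------
   d : dimension, n : m = n.+1 ancillae A_1 .. A_m (A_{k+1} <-> k : 'I_n.+1).
   B k : basis measured by A_{k+1}; (B k) q j = <q|j~_{k+1}> .
   alpha : coefficients of the prepared state in the basis B 0. *)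

(* U^{(k+2)}_{a b} = < b~_{k+2} | a~_{k+1} > for k : 'I_n *)
Definition Uent (d n : nat) (B : 'I_n.+1 -> 'M[C]_d) (k : 'I_n) (a b : 'I_d) : C :=
  \sum_(q < d) Num.conj (B (inord k.+1) q b) * B (inord k) q a.

Definition join_out (d n : nat) (z : {ffun 'I_n -> 'I_d}) (a : 'I_d)
  : {ffun 'I_n.+1 -> 'I_d} :=
  [ffun k : 'I_n.+1 => if unlift ord_max k is Some k' then z k' else a].

(* amplitude of |Psi> at |q>_Q |x_1>...|x_m>, x = join_out z a;
   the Q factor is |x~_m> written in the computational basis of Q *)
Definition Psi (d n : nat) (B : 'I_n.+1 -> 'M[C]_d) (alpha : 'I_d -> C)
  (q : 'I_d) (za : {ffun 'I_n -> 'I_d} * 'I_d) : C :=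
  let x := join_out za.1 za.2 in
  alpha (x ord0) * (\prod_(k < n) Uent B k (x (inord k)) (x (inord k.+1)))
  * B ord_max q (x ord_max).

Definition ptrace1 (T1 T2 : finType) (rho : T1 * T2 -> T1 * T2 -> C)
  : T2 -> T2 -> C :=
  fun u v => \sum_(t : T1) rho (t, u) (t, v).

Definition rhoPsi (d n : nat) (B : 'I_n.+1 -> 'M[C]_d) (alpha : 'I_d -> C)
  (u v : 'I_d * ({ffun 'I_n -> 'I_d} * 'I_d)) : C :=
  Psi B alpha u.1 u.2 * Num.conj (Psi B alpha v.1 v.2).

Definition rhoA (d n : nat) (B : 'I_n.+1 -> 'M[C]_d) (alpha : 'I_d -> C) :=
  ptrace1 (rhoPsi B alpha).

Definition rhoAm (d n : nat) (B : 'I_n.+1 -> 'M[C]_d) (alpha : 'I_d -> C) :=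
  ptrace1 (rhoA B alpha).

Definition qm (d n : nat) (B : 'I_n.+1 -> 'M[C]_d) (alpha : 'I_d -> C) (a : 'I_d) : C :=
  \sum_(z : {ffun 'I_n -> 'I_d})
    let x := join_out z a in
    `|alpha (x ord0)| ^+ 2 *
    \prod_(k < n) `|Uent B k (x (inord k)) (x (inord k.+1))| ^+ 2.

Definition mx_of (T : finType) (rho : T -> T -> C) : 'M[C]_#|T| :=
  \matrix_(i, j) rho (enum_val i) (enum_val j).

Definition eigenvalues (p : nat) (M : 'M[C]_p) : seq C :=
  sval (closed_field_poly_normal (char_poly M)).

(* t log_d t, with 0 log 0 = 0 *)
Definition xlogd (d : nat) (t : R) : R :=
  if t == 0 then 0 else t * (ln t / ln (d%:R)).

(* S = - Tr rho log_d rho = - sum_lambda lambda log_d lambda (eigenvalues of a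
   density matrix are real, we take their real part) *)
Definition vN_entropy (d : nat) (T : finType) (rho : T -> T -> C) : R :=
  - \sum_(l <- eigenvalues (mx_of rho)) xlogd d (complex.Re l).

End QDefs.

From HB Require Import structures.
From mathcomp Require Import all_boot all_order all_algebra.
From mathcomp Require Import reals exp complex.
From mathcomp Require Import ring.
Set Implicit Arguments.
Unset Strict Implicit.
Unset Printing Implicit Defensive.
Import Order.TTheory GRing.Theory Num.Theory.
Local Open Scope ring_scope.
Local Open Scope sesquilinear_scope.

(* Because the basis {|x~_m>} measured by A_m is orthonormal, tracing out Q
   removes all coherences between different outcomes of A_m:
   rho(A_1...A_m) = V diag(q^(m)) V^*, where column a of V is |psi_a> (x) |a>.
   The columns of V are orthonormal, and V D V^* has the same nonzero spectrum
   as D V^* V = D (Sylvester's determinant identity).  Likewise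
   rho(A_m) = diag(q^(m)), so both entropies are the Shannon entropy of q^(m). *)

Lemma char_poly_mulmxC (F : comNzRingType) m n
    (V : 'M[F]_(m, n)) (W : 'M[F]_(n, m)) :
  'X^n * char_poly (V *m W) = 'X^m * char_poly (W *m V).
Proof.
pose Vp := map_mx polyC V; pose Wp := map_mx polyC W.
pose M := block_mx ('X%:M : 'M_m) Vp Wp 1%:M.
have detM : \det M = char_poly (V *m W).
  have -> : M = block_mx 1%:M Vp 0 1%:M *m block_mx ('X%:M - Vp *m Wp) 0 Wp 1%:M.
    by rewrite mulmx_block !mul0mx mulmx1 !mul1mx !add0r subrK.
  rewrite det_mulmx det_ublock det_lblock !det1 !mulr1 mul1r.
  by rewrite /char_poly /char_poly_mx map_mxM.
have detNWM : \det (block_mx 1%:M 0 (- Wp) ('X%:M : 'M_n) *m M) =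
              'X^m * char_poly (W *m V).
  rewrite mulmx_block !mul1mx !mul0mx !addr0 mulmx1 mulNmx scalar_mxC addNr.
  by rewrite det_ublock /char_poly /char_poly_mx map_mxM addrC det_scalar mulNmx.
by rewrite -detM -detNWM det_mulmx det_lblock det1 mul1r det_scalar.
Qed.

Lemma sumr_delta (S : pzSemiRingType) (I : finType) (F : I -> S) (a : I) :
  \sum_c (c == a)%:R * F c = F a.
Proof.
under eq_bigr do rewrite mulr_natl mulrb.
by rewrite -big_mkcond big_pred1_eq.
Qed.

Section Spectrum.
Variable R : realType.
Local Notation C := (R[i]).

Lemma char_poly_eigenvalues p (M : 'M[C]_p) :
  char_poly M = \prod_(l <- eigenvalues M) ('X - l%:P).
Proof.
rewrite /eigenvalues; case: closed_field_poly_normal => s /= ->.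
by rewrite (monicP (char_poly_monic _)) scale1r.
Qed.

Lemma eigenvalues_mulmxC m n (V : 'M[C]_(m, n)) (W : 'M[C]_(n, m)) :
  perm_eq (nseq n 0 ++ eigenvalues (V *m W)) (nseq m 0 ++ eigenvalues (W *m V)).
Proof.
have prodX0 k : \prod_(l <- nseq k (0 : C)) ('X - l%:P) = 'X^k.
  by elim: k => [|k IHk]; rewrite ?big_nil ?expr0 // big_cons IHk subr0 exprS.
apply: prod_XsubC_eq; rewrite !big_cat /= !prodX0 -!char_poly_eigenvalues.
exact: char_poly_mulmxC.
Qed.

Lemma eigenvalues_diag_mx n (D : 'rV[C]_n) :
  perm_eq (eigenvalues (diag_mx D)) [seq D 0 a | a <- enum 'I_n].
Proof.
apply: prod_XsubC_eq; rewrite -char_poly_eigenvalues big_map big_enum /=.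
rewrite char_poly_trig ?diag_mx_is_trig //; apply: eq_bigr => a _.
by rewrite !mxE eqxx mulr1n.
Qed.

Lemma eigenvalues_isometry_conj p n (V : 'M[C]_(p, n)) (D : 'rV[C]_n) :
  V^t* *m V = 1%:M ->
  perm_eq (nseq n 0 ++ eigenvalues (V *m (diag_mx D *m V^t*)))
          (nseq p 0 ++ [seq D 0 a | a <- enum 'I_n]).
Proof.
move=> isoV; have := eigenvalues_mulmxC V (diag_mx D *m V^t*).
rewrite -mulmxA isoV mulmx1 => /perm_trans; apply.
by rewrite perm_cat2l eigenvalues_diag_mx.
Qed.

Lemma vN_entropy_isometry_conj (d : nat) (T : finType) n
    (V : T -> 'I_n -> C) (D : 'I_n -> C) (rho : T -> T -> C) :
  (forall a b, \sum_t (V t a)^* * V t b = (a == b)%:R) ->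
  (forall u v, rho u v = \sum_a V u a * D a * (V v a)^*) ->
  vN_entropy d rho = - \sum_a xlogd d (complex.Re (D a)).
Proof.
move=> isoV rhoE.
pose Vm : 'M[C]_(#|T|, n) := \matrix_(i, a) V (enum_val i) a.
have isoVm : Vm^t* *m Vm = 1%:M.
  apply/matrixP => a b; rewrite !mxE -isoV.
  rewrite (reindex (@enum_val T predT)) /=; last exact/onW_bij/enum_val_bij.
  by apply: eq_bigr => i _; rewrite !mxE.
have rhoVm : mx_of rho = Vm *m (diag_mx (\row_a D a) *m Vm^t*).
  apply/matrixP => i j; rewrite mul_diag_mx !mxE rhoE; apply: eq_bigr => a _.
  by rewrite !mxE mulrA.
pose f (l : C) := xlogd d (complex.Re l).
have f0 k : \sum_(l <- nseq k 0) f l = 0.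
  by rewrite big1_seq // => l /andP[_ /nseqP[-> _]]; rewrite /f /xlogd eqxx.
have := perm_big (P := xpredT) (F := f) (op := +%R) (x := 0) _
          (eigenvalues_isometry_conj (\row_a D a) isoVm).
rewrite /vN_entropy -rhoVm !big_cat /= !f0 !add0r big_map big_enum /= => ->.
by under eq_bigr do rewrite mxE.
Qed.

Lemma vN_entropy_cq (d : nat) (T : finType) n
    (psi : 'I_n -> T -> C) (p : 'I_n -> C) (rho : T * 'I_n -> T * 'I_n -> C) :
  (forall a, \sum_z `|psi a z| ^+ 2 = 1) ->
  (forall z z' a a', rho (z, a) (z', a') =
                     (a == a')%:R * p a * psi a z * (psi a z')^*) ->
  vN_entropy d rho = - \sum_a xlogd d (complex.Re (p a)).
Proof.
move=> psi_norm rhoE.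
apply: (vN_entropy_isometry_conj d (V := fun u a => (u.2 == a)%:R * psi a u.1)).
- move=> a b /=.
  rewrite -(pair_bigA _ (fun z c =>
    ((c == a)%:R * psi a z)^* * ((c == b)%:R * psi b z))).
  under eq_bigr => z _ do under eq_bigr => c _ do rewrite rmorphM rmorph_nat -mulrA.
  under eq_bigr => z _ do rewrite sumr_delta mulrCA.
  rewrite -mulr_sumr; have [<-|_] := eqVneq a b; last by rewrite mul0r.
  by under eq_bigr => z _ do rewrite mulrC -normCK; rewrite psi_norm mulr1.
- move=> [z b] [z' b'] /=; rewrite rhoE.
  under eq_bigr => a _ do rewrite rmorphM rmorph_nat (eq_sym b) -!mulrA.
  by rewrite sumr_delta eq_sym; ring.
Qed.

Lemma vN_entropy_diag (d n : nat) (p : 'I_n -> C) (rho : 'I_n -> 'I_n -> C) :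
  (forall b b', rho b b' = (b == b')%:R * p b) ->
  vN_entropy d rho = - \sum_a xlogd d (complex.Re (p a)).
Proof.
move=> rhoE; apply: (vN_entropy_isometry_conj d (V := fun b a => (b == a)%:R)).
- move=> a b; under eq_bigr => c _ do rewrite rmorph_nat.
  by rewrite sumr_delta.
- move=> b b'; under eq_bigr => a _ do rewrite rmorph_nat (eq_sym b) -mulrA.
  by rewrite sumr_delta rhoE eq_sym mulrC.
Qed.

End Spectrum.

Section ConsecutiveMeasurements.
Variables (R : realType) (d n : nat).
Variables (B : 'I_n.+1 -> 'M[R[i]]_d) (alpha : 'I_d -> R[i]).
Local Notation outcomes := {ffun 'I_n -> 'I_d}.

Definition amp (z : outcomes) (a : 'I_d) : R[i] :=
  let x := join_out z a in
  alpha (x ord0) * \prod_(k < n) Uent B k (x (inord k)) (x (inord k.+1)).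

Lemma join_out_max (z : outcomes) a : join_out z a ord_max = a.
Proof. by rewrite ffunE unlift_none. Qed.

Lemma Psi_amp q z a : Psi B alpha q (z, a) = amp z a * B ord_max q a.
Proof. by rewrite /Psi join_out_max. Qed.

Lemma qm_amp a : qm B alpha a = \sum_z `|amp z a| ^+ 2.
Proof.
by apply: eq_bigr => z _; rewrite /amp /= normrM exprMn normr_prod prodrXl.
Qed.

Lemma qm_ge0 a : 0 <= qm B alpha a.
Proof. by rewrite qm_amp sumr_ge0 // => z _; rewrite exprn_ge0. Qed.

Hypothesis unitary_Bm : B ord_max \is unitarymx.

Lemma rhoA_amp z z' a a' :
  rhoA B alpha (z, a) (z', a') = (a == a')%:R * amp z a * (amp z' a')^*.
Proof.
move: unitary_Bm; rewrite -trmx_unitary => /unitarymxP /matrixP /(_ a a').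
rewrite !mxE => <-.
rewrite /rhoA /ptrace1 /rhoPsi !mulr_suml; apply: eq_bigr => q _ /=.
by rewrite !Psi_amp !mxE rmorphM /=; ring.
Qed.

Section ConditionalState.
Variable z0 : outcomes.

(* |psi_a> = amp(., a) / sqrt(q_a); when q_a = 0 any unit vector will do *)
Definition cond_state (a : 'I_d) (z : outcomes) : R[i] :=
  if qm B alpha a == 0 then (z == z0)%:R else amp z a / sqrtC (qm B alpha a).

Lemma cond_state_norm a : \sum_z `|cond_state a z| ^+ 2 = 1.
Proof.
rewrite /cond_state; have [_|qa_neq0] := eqVneq (qm B alpha a) 0.
  rewrite (bigD1 z0) //= eqxx normr1 expr1n big1 ?addr0 // => z /negbTE->.
  by rewrite normr0 expr0n.
have sqrt_qa : `|sqrtC (qm B alpha a)| ^+ 2 = qm B alpha a.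
  by rewrite -normrX sqrtCK ger0_norm ?qm_ge0.
under eq_bigr do rewrite normrM exprMn normfV exprVn sqrt_qa.
by rewrite -mulr_suml -qm_amp divff.
Qed.

Lemma amp_cond_state z z' a :
  amp z a * (amp z' a)^* = qm B alpha a * cond_state a z * (cond_state a z')^*.
Proof.
rewrite /cond_state; have [qa0|qa_neq0] := eqVneq (qm B alpha a) 0.
  have amp0 w : amp w a = 0.
    have /eqP : `|amp w a| ^+ 2 = 0.
      by move: qa0; rewrite qm_amp => /psumr_eq0P -> // v _; rewrite exprn_ge0.
    by rewrite sqrf_eq0 normr_eq0 => /eqP.
  by rewrite !amp0 qa0 !mul0r.
have sqrt_qa : sqrtC (qm B alpha a) * (sqrtC (qm B alpha a))^* = qm B alpha a.
  by rewrite -normCK -normrX sqrtCK ger0_norm ?qm_ge0.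
have sqrt_neq0 : sqrtC (qm B alpha a) != 0 by rewrite sqrtC_eq0.
rewrite fmorph_div /= -{1}sqrt_qa.
by field; rewrite sqrt_neq0 conjC_eq0 sqrt_neq0.
Qed.

Lemma rhoA_cq z z' a a' :
  rhoA B alpha (z, a) (z', a') =
  (a == a')%:R * qm B alpha a * cond_state a z * (cond_state a z')^*.
Proof.
rewrite rhoA_amp; have [<-|_] := eqVneq a a'; last by rewrite !mul0r.
by rewrite -mulrA amp_cond_state !mulrA.
Qed.

Lemma rhoAm_diag b b' : rhoAm B alpha b b' = (b == b')%:R * qm B alpha b.
Proof.
rewrite /rhoAm /ptrace1.
under eq_bigr do rewrite rhoA_cq -mulrA -normCK.
by rewrite -mulr_sumr cond_state_norm mulr1.
Qed.

End ConditionalState.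
End ConsecutiveMeasurements.

Theorem theorem1 (R : realType) (d n : nat) (hd : (1 < d)%N)
  (B : 'I_n.+1 -> 'M[R[i]]_d) (alpha : 'I_d -> R[i])
  (hB : forall k, B k \is unitarymx)
  (halpha : \sum_(x < d) `|alpha x| ^+ 2 = 1) :
  (exists psi : 'I_d -> {ffun 'I_n -> 'I_d} -> R[i],
      (forall a, \sum_(z : {ffun 'I_n -> 'I_d}) `|psi a z| ^+ 2 = 1) /\
      (forall (z z' : {ffun 'I_n -> 'I_d}) (a a' : 'I_d),
          rhoA B alpha (z, a) (z', a') =
          (a == a')%:R * qm B alpha a * psi a z * Num.conj (psi a z')))
  /\ vN_entropy d (rhoA B alpha) = vN_entropy d (rhoAm B alpha).
Proof.
pose z0 : {ffun 'I_n -> 'I_d} := [ffun => Ordinal (ltnW hd)].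
have rhoA_cqE := rhoA_cq alpha (hB ord_max) z0.
split; first by exists (cond_state B alpha z0); split; [exact: cond_state_norm|].
rewrite (vN_entropy_cq _ (cond_state_norm B alpha z0) rhoA_cqE).
by rewrite (vN_entropy_diag _ (rhoAm_diag alpha (hB ord_max) z0)).
Qed.
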